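(* For every configuration $\gamma_0$ one can (constructively) define: (a) a set of configurations $B(\gamma_0)$ with $\gamma_0\in B(\gamma_0)$, closed under $\mathrm{Step}^{(d)}$ and $\mathrm{Step}^{(p)}$ (if $\gamma\in B(\gamma_0)$ and $\gamma\to\gamma'$ is a d-step or a par-step then $\gamma'\in B(\gamma_0)$); (b) a set $D(\gamma_0)$ and a function $\Phi_{\gamma_0}:\Gamma\to D(\gamma_0)$ that does not depend on the $par$-variables (if $\gamma,\gamma'$ have the same $d$-values at all nodes then $\Phi_{\gamma_0}(\gamma)=\Phi_{\gamma_0}(\gamma')$); (c) a well-founded strict order $\prec_d$ on $D(\gamma_0)$, such that for all configurations $\gamma\in B(\gamma_0)$ and $\gamma'$ with $\gamma\xrightarrow{\mathrm{Step}^{(d)}}\gamma'$ we have $\Phi_{\gamma_0}(\gamma')\prec_d\Phi_{\gamma_0}(\gamma)$.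
   Context: Let $G$ be a finite, connected, undirected graph with node set $V$ and a distinguished node $r$ (the root). Each node $p$ has a fixed ordered list $N(p)$ of its neighbours. A configuration $\gamma$ assigns to each node $p$ a value $\gamma.p.d\in\mathbb N$ and a neighbour $\gamma.p.par\in N(p)$; $\Gamma$ denotes the set of configurations. For a non-root node $p$ let $Dist_p(\gamma)=\min\{\gamma.q.d+1 : q\in N(p)\}$. Algorithm BFS (Dolev et al.) has the following actions. Root: enabled iff $\gamma.r.d\neq 0$; executing it sets $r.d:=0$. Non-root $p$, action CD: enabled iff $\gamma.p.d\ne Dist_p(\gamma)$; executing sets $p.d:=Dist_p(\gamma)$. Non-root $p$, action CP: enabled iff $\gamma.p.d=Dist_p(\gamma)$ and $\gamma.q_0.d+1\neq\gamma.p.d$ where $q_0=\gamma.p.par$; executing sets $p.par$ to the first $q$ in $N(p)$ with $\gamma.q.d+1=\gamma.p.d$. A node is enabled if one of its actions is enabled. A step $\gamma\to\gamma'$ (unfair daemon) holds iff there is a nonempty set $S$ of nodes enabled in $\gamma$ such that $\gamma'$ is obtained by every $p\in S$ simultaneously executing its enabled action (evaluated in $\gamma$), all other nodes unchanged. $\mathrm{Step}^{(d)}$: steps with $\gamma.r.d=\gamma'.r.d$ and $\gamma.p.d\ne\gamma'.p.d$ for some node $p$. $\mathrm{Step}^{(p)}$: steps with $\gamma.p.d=\gamma'.p.d$ for all $p$. A strict order is well-founded if it has no infinite descending chain. *)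

From mathcomp Require Import all_boot.
Set Implicit Arguments. Unset Strict Implicit. Unset Printing Implicit Defensive.

(* Graph: nodes V (finite), symmetric irreflexive adjacency e, root r,
   ordered neighbour lists N p (uniq, members = neighbours). *)

Section BFS.
Variables (V : finType) (N : V -> seq V) (r : V).

Record config := Config {
  cd : V -> nat;
  cpar : V -> V;
  cpar_in : forall p, cpar p \in N p }.

(* Dist_p(g) = min { g.q.d + 1 : q in N(p) } (N p is nonempty for non-root
   nodes of a connected graph with >= 2 nodes). *)
Definition Dist (g : config) (p : V) : nat :=
  let l := [seq (cd g q).+1 | q <- N p] in foldr minn (head 0 l) l.

Definition enabled_root (g : config) : bool := cd g r != 0.
Definition enabled_CD (g : config) (p : V) : bool := cd g p != Dist g p.
Definition enabled_CP (g : config) (p : V) : bool :=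
  (cd g p == Dist g p) && ((cd g (cpar g p)).+1 != cd g p).

Definition enabled (g : config) (p : V) : bool :=
  if p == r then enabled_root g else enabled_CD g p || enabled_CP g p.

Definition first_par (g : config) (p : V) : V :=
  nth p (N p) (find (fun q => (cd g q).+1 == cd g p) (N p)).

Definition exec_d (g : config) (p : V) : nat :=
  if p == r then 0 else if enabled_CD g p then Dist g p else cd g p.
Definition exec_par (g : config) (p : V) : V :=
  if (p != r) && enabled_CP g p then first_par g p else cpar g p.

Definition Step (g g' : config) : Prop :=
  exists S : {set V}, S != set0 /\ (forall p, p \in S -> enabled g p) /\
    (forall p, cd g' p = (if p \in S then exec_d g p else cd g p) /\
               cpar g' p = (if p \in S then exec_par g p else cpar g p)).

Definition Step_d (g g' : config) : Prop :=
  Step g g' /\ cd g r = cd g' r /\ exists p, cd g p <> cd g' p.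

Definition Step_p (g g' : config) : Prop :=
  Step g g' /\ forall p, cd g p = cd g' p.

End BFS.

Definition strict_wf_order (D : Type) (lt : D -> D -> Prop) : Prop :=
  (forall x, ~ lt x x) /\ (forall x y z, lt x y -> lt y z -> lt x z) /\
  well_founded lt.

From mathcomp Require Import all_boot zify.
From Stdlib Require Wf_nat.
Set Implicit Arguments. Unset Strict Implicit. Unset Printing Implicit Defensive.

(* A d-step never changes the root, and every node it changes moves to its
   current Dist.  Let v be the least level touched by the step (the least
   value min(d p, d' p) over changed nodes p).  Below v nothing changes, and at
   level v either a CD-enabled node leaves (the number of CD-enabled nodes at
   level v drops) or none leaves and some node arrives (that number does not
   grow, while the size of level v grows).  Hence the digit
   #CD-enabled(v) * (|V|+1) + (|V| - #level(v)) decreases while the digits of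
   lower levels stay fixed, so the base-(|V|+1)^2 number whose most significant digit
   is level 0 decreases.  For this number to live on a fixed number of digits,
   B bounds d p by max_q gamma0.q.d + h p, where h p is the distance from the
   root: a d-step sets d p to Dist p <= d q + 1 for a neighbour q with
   h q < h p, which preserves the bound. *)

Section Numerals.
Variable b : nat.

Definition num_of_digits (s : seq nat) : nat := foldl (fun a x => a * b + x) 0 s.

Lemma foldl_digits a s :
  foldl (fun a x => a * b + x) a s = a * b ^ size s + num_of_digits s.
Proof.
elim: s a => [|x s IH] a /=; first by rewrite muln1 addn0.
rewrite /num_of_digits /= IH [in RHS]IH expnS; lia.
Qed.

Lemma num_of_digits_lt s : all (fun x => x < b) s -> num_of_digits s < b ^ size s.
Proof.
elim: s => [|x s IH] //= /andP [xb /IH IHs].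
rewrite /num_of_digits /= foldl_digits expnS.
have : x * b ^ size s + b ^ size s <= b * b ^ size s.
  by rewrite addnC -mulSn leq_mul2r xb orbT.
lia.
Qed.

Lemma num_of_digits_lex pre x y s1 s2 :
  x < y -> size s1 = size s2 -> all (fun z => z < b) s1 ->
  num_of_digits (pre ++ x :: s1) < num_of_digits (pre ++ y :: s2).
Proof.
move=> xy s12 s1b; rewrite /num_of_digits !foldl_cat /= !(foldl_digits (_ * b + _)) -s12.
have := num_of_digits_lt s1b.
set a := foldl _ 0 pre; set P := b ^ size s1.
have : (a * b + x).+1 * P <= (a * b + y) * P by rewrite leq_mul2r ltn_add2l xy orbT.
lia.
Qed.

End Numerals.

Lemma foldr_minn_le (a : nat) s y : y \in s -> foldr minn a s <= y.
Proof.
elim: s => //= z s IH; rewrite in_cons => /orP [/eqP->|/IH]; first exact: geq_minl.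
exact: leq_trans (geq_minr _ _).
Qed.

Lemma minn_foldr_minn (a k : nat) s :
  minn (foldr minn a s) k = foldr minn (minn a k) [seq minn x k | x <- s].
Proof. by elim: s => //= z s <-; lia. Qed.

Lemma minn_foldr_head (T : Type) (f1 f2 : T -> nat) k s :
  (forall x, minn (f1 x) k = minn (f2 x) k) ->
  minn (foldr minn (head 0 (map f1 s)) (map f1 s)) k =
  minn (foldr minn (head 0 (map f2 s)) (map f2 s)) k.
Proof.
case: s => [|x s] //= f12; rewrite -!/(foldr minn _ (_ :: _)) !minn_foldr_minn /= f12.
by congr (minn _ (foldr _ _ _)); rewrite -!map_comp; apply: eq_map => y /=.
Qed.

Lemma eq_minn_cap x y k u : minn x k = minn y k -> u < k -> (x == u) = (y == u).
Proof. by move=> xyk uk; apply/eqP/eqP; lia. Qed.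

Section Height.
Variables (V : finType) (e : rel V) (r : V).

Definition ball (k : nat) : {set V} :=
  iter k (fun A => A :|: [set q | [exists x in A, e x q]]) [set r].

Lemma ballS k q : (q \in ball k.+1) = (q \in ball k) || [exists x in ball k, e x q].
Proof. by rewrite /ball iterS !inE. Qed.

Lemma ball_path x s k :
  x \in ball k -> path e x s -> last x s \in ball (k + size s).
Proof.
elim: s x k => [|y s IH] x k /=; first by rewrite addn0.
move=> xk /andP [exy ys]; rewrite addnS -addSn; apply: IH ys.
by rewrite ballS; apply/orP; right; apply/existsP; exists x; rewrite xk.
Qed.

Lemma exists_descending_height :
  (forall p, connect e r p) ->
  exists h : V -> nat, forall p, p != r -> exists2 q, e q p & (h q).+1 <= h p.
Proof.
move=> conn.
have in_ball p : exists k, p \in ball k.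
  have /connectP [s rs ->] := conn p.
  by exists (0 + size s); apply: ball_path; rewrite // inE.
exists (fun p => ex_minn (in_ball p)) => p pr.
case: ex_minnP => [[|k]]; first by rewrite inE (negbTE pr).
rewrite ballS => /orP [pk min_k|/existsP [q /andP [qk eqp]] _].
  by have := min_k k pk; rewrite ltnn.
by exists q => //; case: ex_minnP => k' _; apply.
Qed.

End Height.

Section Potential.
Variables (V : finType) (N : V -> seq V) (r : V).

Definition Dist_of (d : V -> nat) (p : V) : nat :=
  let l := [seq (d q).+1 | q <- N p] in foldr minn (head 0 l) l.

Lemma Dist_of_le d p q : q \in N p -> Dist_of d p <= (d q).+1.
Proof. by move=> qp; apply: foldr_minn_le; apply: map_f. Qed.

Lemma Dist_of_cap d d' v :
  (forall q, minn (d q) v = minn (d' q) v) ->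
  forall p, minn (Dist_of d p) v.+1 = minn (Dist_of d' p) v.+1.
Proof.
move=> dd' p; apply: minn_foldr_head => q.
by have := dd' q; lia.
Qed.

Definition CD_level (d : V -> nat) (v : nat) : {set V} :=
  [set p | (p != r) && (d p == v) && (Dist_of d p != v)].

Definition level (d : V -> nat) (v : nat) : {set V} := [set p | d p == v].

Definition digit (d : V -> nat) (v : nat) : nat :=
  #|CD_level d v| * #|V|.+1 + (#|V| - #|level d v|).

Definition pot (L : nat) (d : V -> nat) : nat :=
  num_of_digits (#|V|.+1 ^ 2) [seq digit d v | v <- iota 0 L.+1].

Lemma digit_lt d v : digit d v < #|V|.+1 ^ 2.
Proof. by rewrite /digit; have := max_card (CD_level d v); nia. Qed.

Lemma digit_eq_below d d' v :
  (forall q, minn (d q) v = minn (d' q) v) ->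
  forall u, u < v -> digit d u = digit d' u.
Proof.
move=> dd' u uv; have Ddd' := Dist_of_cap dd'.
have level_eq p : (d p == u) = (d' p == u) by apply: eq_minn_cap (dd' p) uv.
have Dist_eq p : (Dist_of d p == u) = (Dist_of d' p == u).
  by apply: eq_minn_cap (Ddd' p) (ltnW uv).
rewrite /digit; have -> : CD_level d u = CD_level d' u by apply/setP => p; rewrite !inE level_eq Dist_eq.
by have -> : level d u = level d' u by apply/setP => p; rewrite !inE level_eq.
Qed.

Lemma pot_eq L d d' : d =1 d' -> pot L d = pot L d'.
Proof.
move=> dd'; rewrite /pot; congr num_of_digits; apply/eq_in_map => u.
rewrite mem_iota => /andP [_ uL]; apply: (@digit_eq_below _ _ L.+1) => // q.
by rewrite dd'.
Qed.

Section DistStep.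
Variables (d d' : V -> nat) (v : nat) (p0 : V).
Hypothesis changed_to_Dist : forall p, d p != d' p -> p != r /\ d' p = Dist_of d p.
Hypothesis agree_below : forall q, minn (d q) v = minn (d' q) v.
Hypothesis p0_changed : d p0 != d' p0.
Hypothesis p0_level : minn (d p0) (d' p0) = v.

Let Dist_eq p : (Dist_of d p == v) = (Dist_of d' p == v).
Proof. exact: eq_minn_cap (Dist_of_cap agree_below p) (ltnSn v). Qed.

Lemma CD_level_step_sub : CD_level d' v \subset CD_level d v.
Proof.
apply/subsetP => p; rewrite !inE => /andP [/andP [pr /eqP d'p] Dp].
rewrite pr /=; have [dp|dp] := eqVneq (d p) (d' p); first by rewrite dp d'p eqxx Dist_eq.
by have [_ d'pD] := changed_to_Dist dp; move: Dp; rewrite -Dist_eq -d'pD d'p eqxx.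
Qed.

Lemma digit_step_lt : digit d' v < digit d v.
Proof.
have := max_card (level d v); have := max_card (level d' v); rewrite /digit.
have [/existsP [p /andP [pv pv']]|/existsPn stay] :=
  boolP [exists p, (p \in level d v) && (p \notin level d' v)].
- move: pv pv'; rewrite !inE => /eqP dp d'p.
  have [pr d'pD] : p != r /\ d' p = Dist_of d p by apply: changed_to_Dist; rewrite dp eq_sym.
  have : #|CD_level d' v| < #|CD_level d v|.
    apply/proper_card/properP; split; first exact: CD_level_step_sub.
    exists p; last by rewrite inE (negbTE d'p) andbF.
    by rewrite inE pr dp eqxx -d'pD.
  nia.
- have stay_in p : p \in level d v -> p \in level d' v.
    by move=> pv; have := stay p; rewrite pv /= negbK.
  have CD_eq : CD_level d' v = CD_level d v.
    apply/eqP; rewrite eqEsubset CD_level_step_sub /=; apply/subsetP => p.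
    rewrite !inE => /andP [/andP [pr dp] Dp]; rewrite pr -Dist_eq Dp andbT /=.
    by have := stay_in p; rewrite !inE; apply.
  have : #|level d v| < #|level d' v|.
    apply/proper_card/properP; split; first by apply/subsetP.
    have dp0 : d p0 != v.
      by apply: contra p0_changed => dp0; have := stay_in p0; rewrite !inE dp0 => /(_ isT) /eqP ->.
    exists p0; rewrite !inE //; apply/eqP; move: dp0 => /eqP; lia.
  rewrite CD_eq; lia.
Qed.

End DistStep.

Lemma pot_lt L d d' :
  (forall p, d p != d' p -> p != r /\ d' p = Dist_of d p) ->
  (exists p, d p != d' p) ->
  (forall p, d p <= L) ->
  pot L d' < pot L d.
Proof.
move=> changed_to_Dist [p dp] dL.
pose touched v := [exists p, (d p != d' p) && (minn (d p) (d' p) == v)].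
have : exists v, touched v by exists (minn (d p) (d' p)); apply/existsP; exists p; rewrite dp /=.
case/ex_minnP => v /existsP [p0 /andP [p0_changed /eqP p0_level]] min_v.
have agree_below q : minn (d q) v = minn (d' q) v.
  have [->//|dq] := eqVneq (d q) (d' q).
  have : v <= minn (d q) (d' q) by apply: min_v; apply/existsP; exists q; rewrite dq /=.
  lia.
have vL : v <= L by have := dL p0; lia.
rewrite /pot; have -> : iota 0 L.+1 = iota 0 v ++ v :: iota v.+1 (L - v).
  have -> : L.+1 = v + (L - v).+1 by lia.
  by rewrite iotaD.
rewrite !map_cat /=.
have -> : [seq digit d u | u <- iota 0 v] = [seq digit d' u | u <- iota 0 v].
  by apply/eq_in_map => u; rewrite mem_iota => /andP [_ uv]; apply: digit_eq_below.
apply: num_of_digits_lex; first exact: digit_step_lt p0_level.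
  by rewrite !size_map.
by apply/allP => _ /mapP [u _ ->]; apply: digit_lt.
Qed.

End Potential.

Lemma Step_d_changed (V : finType) (N : V -> seq V) (r : V) (g g' : config N) :
  Step_d r g g' -> forall q, cd g q != cd g' q -> q != r /\ cd g' q = Dist_of N (cd g) q.
Proof.
case=> [[S [_ [_ exec]]] [root_fixed _]] q.
have [->|qr] := eqVneq q r; first by rewrite root_fixed eqxx.
have [-> _] := exec q; case: (q \in S); last by rewrite eqxx.
by rewrite /exec_d (negbTE qr); case: enabled_CD; rewrite ?eqxx.
Qed.

Theorem proposition2 (V : finType) (e : rel V) (r : V) (N : V -> seq V)
  (e_sym : symmetric e) (e_irr : irreflexive e)
  (e_conn : forall x y : V, connect e x y)
  (N_uniq : forall p, uniq (N p))
  (N_adj : forall p q, (q \in N p) = e p q)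
  (g0 : config N) :
  exists (B : config N -> Prop) (D : Type) (Phi : config N -> D)
         (lt : D -> D -> Prop),
    [/\ B g0,
        (forall g g', B g -> (Step_d r g g' \/ Step_p r g g') -> B g'),
        (forall g g', (forall p, cd g p = cd g' p) -> Phi g = Phi g'),
        strict_wf_order lt
      & forall g g', B g -> Step_d r g g' -> lt (Phi g') (Phi g)].
Proof.
have [h h_desc] := exists_descending_height (e_conn r).
pose H p := \max_q cd g0 q + h p.
pose L := \max_p H p.
exists (fun g => forall p, cd g p <= H p), nat, (fun g => pot N r L (cd g)),
  (fun x y => x < y); split.
- by move=> p; apply: leq_trans (leq_addr _ _); apply: leq_bigmax.
- move=> g g' gB [step_d|[_ same_d]] q; last by rewrite -same_d.
  have [<-//|dq] := eqVneq (cd g q) (cd g' q).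
  have [qr ->] := Step_d_changed step_d dq.
  have [x exq hxq] := h_desc q qr.
  have xq : x \in N q by rewrite N_adj e_sym.
  apply: leq_trans (Dist_of_le (cd g) xq) _.
  by have := gB x; rewrite /H; lia.
- by move=> g g' same_d; apply: pot_eq.
- split; first by move=> x; rewrite ltnn.
  split; first by move=> x y z; apply: ltn_trans.
  by apply: (Wf_nat.well_founded_lt_compat _ id) => x y /ltP.
- move=> g g' gB step_d; apply: pot_lt.
  + exact: Step_d_changed step_d.
  + by have [_ [_ [p dp]]] := step_d; exists p; apply/eqP.
  + by move=> q; apply: leq_trans (gB q) (leq_bigmax q).
Qed.
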